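(* Let $q$ be a power of an odd prime, $r\ge1$ an integer, and $\mu\in\mathbb{F}_q$ such that $x^{2r+1}-\mu$ is irreducible in $\mathbb{F}_q[x]$. Then the number of $(z_0,\dots,z_{2r})\in\mathbb{F}_q^{2r+1}$ satisfying the system of $2r+1$ equations \[ \mu z_{l+r}^2+2\sum_{\{i,j\}\in U_{2l-1}}\mu_{\{i,j\}}z_iz_j=0\quad(1\le l\le r), \qquad z_l^2+2\sum_{\{i,j\}\in U_{2l}}\mu_{\{i,j\}}z_iz_j=0\quad(0\le l\le r), \] is at most $\frac{2r+5}{3}\,q^{\frac{4r}{3}+1}$.
   Context: For $0\le k\le 2r$, $U_k$ is the set of $2$-element subsets $\{i,j\}\subset\{0,1,\dots,2r\}$ (so $i\ne j$) with $i+j\equiv k\pmod{2r+1}$. For such a subset, $\mu_{\{i,j\}}=1$ if $1\le i+j\le 2r$ and $\mu_{\{i,j\}}=\mu$ if $2r+1\le i+j\le 4r-1$. *)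

From HB Require Import structures.
From mathcomp Require Import all_boot all_order all_algebra.
Set Implicit Arguments. Unset Strict Implicit. Unset Printing Implicit Defensive.
Import Order.TTheory GRing.Theory Num.Theory.
Local Open Scope ring_scope.

(* mu_{i,j} = 1 if i + j <= 2r, and mu otherwise (i + j >= 1 always holds
   for i <> j). *)
Definition mu_pair (F : fieldType) (r : nat) (mu : F) (i j : nat) : F :=
  if (i + j <= 2 * r)%N then 1 else mu.

Definition Usum (F : fieldType) (r : nat) (mu : F)
    (z : {ffun 'I_(2 * r).+1 -> F}) (k : nat) : F :=
  \sum_(i < (2 * r).+1) \sum_(j < (2 * r).+1 |
        (i < j)%N && ((i + j) %% (2 * r + 1) == k)%N)
     mu_pair r mu i j * z i * z j.

Definition lemma3p5_system (F : fieldType) (r : nat) (mu : F)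
    (z : {ffun 'I_(2 * r).+1 -> F}) : bool :=
  [forall l : 'I_r.+1,
     ((0 < l)%N ==>
        (mu * (z (inord (l + r))) ^+ 2 + 2 * Usum mu z (2 * l - 1) == 0))
     && ((z (inord l)) ^+ 2 + 2 * Usum mu z (2 * l) == 0)].

From HB Require Import structures.
From mathcomp Require Import all_boot all_order all_algebra.
From mathcomp Require Import zify ring.
Set Implicit Arguments.
Unset Strict Implicit.
Unset Printing Implicit Defensive.

Import GRing.Theory.
Local Open Scope ring_scope.

(* Put P(X) = sum_i z_i X^i and n = 2r+1.  Reducing P^2 modulo X^n - mu folds
   the monomial z_i z_j X^(i+j) onto X^((i+j) mod n) with the factor
   mu_{i,j}, and splitting the resulting coefficient of X^k into its diagonal
   and off-diagonal parts shows that it is exactly the left-hand side of one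
   of the 2r+1 equations.  So every solution satisfies X^n - mu | P^2, hence
   X^n - mu | P by irreducibility, hence P = 0 since deg P < n.  The system
   has only the trivial solution, and the bound holds without using that q is
   odd or that r >= 1. *)

Lemma sum_symmetric (R : nmodType) (m : nat) (f : 'I_m -> 'I_m -> R) :
    (forall i j, f i j = f j i) ->
  \sum_(i < m) \sum_(j < m) f i j
    = \sum_(i < m) f i i + (\sum_(i < m) \sum_(j < m | (i < j)%N) f i j) *+ 2.
Proof.
move=> f_sym.
have split_row i : \sum_(j < m) f i j = f i i
    + \sum_(j < m | (i < j)%N) f i j + \sum_(j < m | (j < i)%N) f j i.
  rewrite (bigD1 i) //= (bigID (fun j : 'I_m => (i < j)%N)) /= addrA.
  congr (_ + _ + _).
    by apply: eq_bigl => j; case: eqVneq => [->|_]; rewrite ?ltnn ?andbF.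
  apply: eq_big => [j|j _]; last exact: f_sym.
  by rewrite -leqNgt ltn_neqAle val_eqE.
under eq_bigr do rewrite split_row.
by rewrite !big_split /= -addrA mulr2n (exchange_big_dep xpredT).
Qed.

Lemma modn_lt_double (n s : nat) :
  (s < 2 * n)%N -> (s %% n = if s < n then s else s - n)%N.
Proof.
move=> s_lt; case: ifP => [|s_ge]; first exact: modn_small.
have n_le : (n <= s)%N by rewrite leqNgt s_ge.
by rewrite -[in LHS](subnK n_le) modnDr modn_small //; lia.
Qed.

Lemma dvdp_XnsubC_shift (R : idomainType) (c : R) (m n : nat) :
  ('X^n - c%:P) %| 'X^(m + n) - c *: 'X^m.
Proof.
have -> : 'X^(m + n) - c *: 'X^m = 'X^m * ('X^n - c%:P).
  by rewrite mulrBr -exprD mulrC mul_polyC.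
exact: dvdp_mull.
Qed.

Lemma irredp_dvdp_sqr (R : idomainType) (p q : {poly R}) :
  irreducible_poly p -> p %| q ^+ 2 -> p %| q.
Proof.
move=> p_irr; apply: contraLR => p_ndvd_q.
by rewrite expr2 Gauss_dvdpl ?irreducible_poly_coprime.
Qed.

Lemma dvdp_sum (R : idomainType) (I : Type) (s : seq I) (P : pred I)
    (G : I -> {poly R}) (d : {poly R}) :
  (forall i, P i -> d %| G i) -> d %| \sum_(i <- s | P i) G i.
Proof.
by move=> d_dvd; apply: (big_ind (fun q => d %| q)); [exact: dvdp0 | exact: dvdp_add |].
Qed.

Section SquareModXnsubC.
Variables (F : fieldType) (r : nat) (mu : F).
Local Notation n := (2 * r).+1.
Implicit Types (z : {ffun 'I_n -> F}) (k l : nat).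

Lemma double_modn_even (i : 'I_n) l :
  (l <= r)%N -> ((2 * i) %% n == 2 * l)%N = (i == inord l :> 'I_n).
Proof.
move=> l_le; have i_lt := ltn_ord i; rewrite -val_eqE /= inordK; last lia.
by rewrite modn_lt_double; [case: ifP => ?; apply/eqP/eqP|]; lia.
Qed.

Lemma double_modn_odd (i : 'I_n) l :
  (0 < l <= r)%N -> ((2 * i) %% n == 2 * l - 1)%N = (i == inord (l + r) :> 'I_n).
Proof.
move=> l_bd; have i_lt := ltn_ord i; rewrite -val_eqE /= inordK; last lia.
by rewrite modn_lt_double; [case: ifP => ?; apply/eqP/eqP|]; lia.
Qed.

Definition vec_poly (z : {ffun 'I_n -> F}) : {poly F} := \poly_(i < n) z (inord i).

(* The coefficient of X^k in vec_poly z ^+ 2 reduced modulo X^n - mu. *)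
Definition sqr_coef (z : {ffun 'I_n -> F}) (k : nat) : F :=
  \sum_(i < n) \sum_(j < n | ((i + j) %% n == k)%N) mu_pair r mu i j * z i * z j.

Lemma sqr_coefE z k :
  sqr_coef z k = \sum_(i < n | ((2 * i) %% n == k)%N) mu_pair r mu i i * z i ^+ 2
                 + 2 * Usum mu z k.
Proof.
rewrite /sqr_coef /Usum addn1.
under eq_bigr do rewrite big_mkcond.
rewrite sum_symmetric => [|i j]; last first.
  by rewrite addnC /mu_pair addnC mulrAC.
rewrite mulr_natl; congr (_ + _ *+ 2).
  rewrite [RHS]big_mkcond; apply: eq_bigr => i _.
  by rewrite addnn -mul2n expr2 mulrA.
by apply: eq_bigr => i _; rewrite big_mkcondr.
Qed.

Lemma sqr_coef_even z l : (l <= r)%N ->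
  sqr_coef z (2 * l) = z (inord l) ^+ 2 + 2 * Usum mu z (2 * l).
Proof.
move=> l_le; rewrite sqr_coefE (eq_bigl _ _ (fun i => double_modn_even i l_le)).
by rewrite big_pred1_eq /mu_pair inordK ?ifT ?mul1r //; lia.
Qed.

Lemma sqr_coef_odd z l : (0 < l <= r)%N ->
  sqr_coef z (2 * l - 1) = mu * z (inord (l + r)) ^+ 2 + 2 * Usum mu z (2 * l - 1).
Proof.
move=> l_bd; rewrite sqr_coefE (eq_bigl _ _ (fun i => double_modn_odd i l_bd)).
by rewrite big_pred1_eq /mu_pair inordK ?ifF //; lia.
Qed.

Lemma system_sqr_coef_eq0 z k :
  lemma3p5_system mu z -> (k < n)%N -> sqr_coef z k = 0.
Proof.
move=> /forallP sys k_lt; have := odd_double_half k.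
case: (odd k) => /= k_eq.
- have l_bd : (0 < (k./2).+1 <= r)%N by lia.
  have := sys (inord (k./2).+1); rewrite inordK; last lia.
  case/andP => /implyP /(_ isT) /eqP; rewrite -sqr_coef_odd //.
  by have -> : (2 * (k./2).+1 - 1 = k)%N by lia.
- have l_le : (k./2 <= r)%N by lia.
  have := sys (inord k./2); rewrite inordK; last lia.
  case/andP => _ /eqP; rewrite -sqr_coef_even //.
  by have -> : (2 * k./2 = k)%N by lia.
Qed.

Lemma vec_polyE z : vec_poly z = \sum_(i < n) z i *: 'X^i.
Proof. by rewrite /vec_poly poly_def; apply: eq_bigr => i _; rewrite inord_val. Qed.

Lemma vec_poly_sqr_mod z :
  ('X^n - mu%:P) %| vec_poly z ^+ 2 - \sum_(k < n) sqr_coef z k *: 'X^k.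
Proof.
have sqrE : vec_poly z ^+ 2 = \sum_(i < n) \sum_(j < n) (z i * z j) *: 'X^(i + j).
  rewrite vec_polyE expr2 mulr_suml; apply: eq_bigr => i _.
  rewrite mulr_sumr; apply: eq_bigr => j _.
  by rewrite -scalerAl -scalerAr scalerA exprD.
have reducedE : \sum_(k < n) sqr_coef z k *: 'X^k =
    \sum_(i < n) \sum_(j < n) (mu_pair r mu i j * z i * z j) *: 'X^((i + j) %% n).
  under eq_bigr do rewrite scaler_suml.
  rewrite exchange_big; apply: eq_bigr => i _.
  under eq_bigr do rewrite scaler_suml big_mkcond.
  rewrite exchange_big; apply: eq_bigr => j _ /=.
  have ij_mod_lt : ((i + j) %% n < n)%N by rewrite ltn_pmod.
  rewrite (bigD1 (Ordinal ij_mod_lt)) //= eqxx big1 ?addr0 // => k k_neq.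
  by case: eqP => // ij_k; move: k_neq; rewrite -val_eqE /= ij_k eqxx.
rewrite sqrE reducedE -sumrB; apply: dvdp_sum => i _.
rewrite -sumrB; apply: dvdp_sum => j _.
have [i_lt j_lt] := (ltn_ord i, ltn_ord j).
rewrite /mu_pair modn_lt_double; last lia.
case: ifP => ij_small; first by rewrite ifT ?mul1r ?subrr ?dvdp0 //; lia.
rewrite ifF; last lia.
have -> : (i + j = (i + j - n) + n)%N by lia.
rewrite addnK; set m := (i + j - n)%N.
have -> : (z i * z j) *: 'X^(m + n) - (mu * z i * z j) *: 'X^m
    = (z i * z j)%:P * ('X^(m + n) - mu *: 'X^m).
  by rewrite mul_polyC scalerBr scalerA; congr (_ - _ *: _); ring.
exact/dvdp_mull/dvdp_XnsubC_shift.
Qed.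

Lemma system_solution_eq0 z :
  irreducible_poly ('X^n - mu%:P) -> lemma3p5_system mu z -> z = 0.
Proof.
move=> irr sys.
have dvd_sqr : ('X^n - mu%:P) %| vec_poly z ^+ 2.
  have := vec_poly_sqr_mod z; rewrite big1 ?subr0 // => k _.
  by rewrite system_sqr_coef_eq0 ?scale0r.
have /eqP vec_poly0 : vec_poly z == 0.
  have := irredp_dvdp_sqr irr dvd_sqr.
  by rewrite /dvdp modp_small // size_XnsubC // ltnS size_poly.
apply/ffunP => i; have := congr1 (coefp i) vec_poly0.
by rewrite /= coef_poly ltn_ord inord_val coef0 ffunE.
Qed.
End SquareModXnsubC.

Theorem lemma3p5 (F : finFieldType) (r : nat) (mu : F) :
  odd #|F| -> (1 <= r)%N ->
  irreducible_poly ('X^(2 * r + 1) - mu%:P) ->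
  (27 * #|[set z : {ffun 'I_(2 * r).+1 -> F} | lemma3p5_system mu z]| ^ 3
     <= (2 * r + 5) ^ 3 * #|F| ^ (4 * r + 3))%N.
Proof.
move=> _ _; rewrite addn1 => irr.
set N := #|_|.
have N_le1 : (N <= 1)%N.
  rewrite -(cards1 (0 : {ffun 'I_(2 * r).+1 -> F})); apply: subset_leq_card.
  by apply/subsetP => z; rewrite !inE => /(system_solution_eq0 irr) ->.
have q_pos : (0 < #|F|)%N by apply/card_gt0P; exists 0.
apply: (@leq_trans 27).
  by rewrite -[X in (_ <= X)%N]muln1 leq_mul2l -(exp1n 3) leq_exp2r.
rewrite -[27%N]muln1; apply: leq_mul; last by rewrite expn_gt0 q_pos.
by rewrite -[27%N]/(3 ^ 3)%N leq_exp2r //; lia.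
Qed.
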